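(* For every point $(w,z)\in\mathbb{R}^2$ there exist sequences $(p_n)_{n\ge1}$, $(q_n)_{n\ge1}$, $(\gamma_n)_{n\ge1}$ such that: (1) $(p_n)$ and $(q_n)$ are increasing sequences of rational numbers converging to $w$ and $z$ respectively; (2) each $\gamma_n$ is a positive rational number; (3) setting $\Delta_n:=p_{n+1}-p_n$, we have $0<\Delta_n<1$ and $q_{n+1}=q_n+\Delta_n(1+\gamma_n)$ for all $n$; (4) $\lim_{n\to\infty}\gamma_n/(\Delta_n)^{n-1}=0$. *)

From Stdlib Require Export Reals QArith Qreals.
Open Scope R_scope.

Definition DeltaQ (p : nat -> Q) (n : nat) : R := Q2R (p (S n)) - Q2R (p n).

(* Take p_n a dyadic approximation of w from below at precision 2^-(n+1), so that
   Δ_n ≍ 2^-n, and q_n = p_n + b_n with b_n a dyadic approximation of z - w from below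
   at the much finer precision 2^-n(n+3).  Then γ_n := (b_{n+1} - b_n) / Δ_n gives the
   recurrence, and γ_n / Δ_n^(n-1) = (b_{n+1} - b_n) / Δ_n^n ≤ 2^-n(n+3) · 2^n(n+2) → 0.
   Approximating from strictly below makes every increment positive. *)

From Stdlib Require Import Reals QArith Qreals Lra Lia.
Open Scope R_scope.

Lemma half_pow_pos k : 0 < (/ 2) ^ k.
Proof. apply pow_lt; lra. Qed.

Lemma half_pow_lt k m : (k < m)%nat -> (/ 2) ^ m < (/ 2) ^ k.
Proof.
  intros Hkm. rewrite !pow_inv.
  apply Rinv_lt_contravar; [apply Rmult_lt_0_compat|apply Rlt_pow]; try apply pow_lt; lra || lia.
Qed.

Lemma half_pow_le k m : (k <= m)%nat -> (/ 2) ^ m <= (/ 2) ^ k.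
Proof.
  intros Hkm. destruct (Nat.eq_dec k m) as [->|Hne]; [lra|].
  left. apply half_pow_lt. lia.
Qed.

Lemma Un_cv_half_pow_bound (a : nat -> R) (l C : R) : 0 < C ->
  (forall n, (1 <= n)%nat -> Rabs (a n - l) <= C * (/ 2) ^ n) -> Un_cv a l.
Proof.
  intros HC Ha eps Heps.
  destruct (pow_lt_1_zero (/ 2) ltac:(rewrite Rabs_right; lra) (eps / C))
    as [N HN]; [apply Rdiv_lt_0_compat; lra|].
  exists (max N 1). intros n Hn. unfold R_dist.
  specialize (HN n ltac:(lia)). rewrite Rabs_right in HN by (left; apply half_pow_pos).
  eapply Rle_lt_trans; [apply Ha; lia|].
  replace eps with (C * (eps / C)) by (field; lra).
  apply Rmult_lt_compat_l; lra.
Qed.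

Lemma Rdiv_pow_le (u c L D : R) (n : nat) :
  0 < L <= D -> 0 <= u <= c * L ^ n -> u / D ^ n <= c.
Proof.
  intros [HL HLD] [Hu Huc].
  assert (HLn : 0 < L ^ n) by (apply pow_lt; lra).
  assert (HLDn : L ^ n <= D ^ n) by (apply pow_incr; lra).
  apply Rle_trans with (u / L ^ n).
  - unfold Rdiv. apply Rmult_le_compat_l; [lra|]. apply Rinv_le_contravar; lra.
  - apply Rle_trans with (c * L ^ n / L ^ n); [|right; field; lra].
    apply Rmult_le_compat_r; [left; apply Rinv_0_lt_compat|]; lra.
Qed.

Lemma Int_part_ge (m : Z) (y : R) : IZR m <= y -> (m <= Int_part y)%Z.
Proof.
  intros Hm. destruct (base_Int_part y) as [_ Hy].
  assert (Hlt : IZR m < IZR (Int_part y + 1)) by (rewrite plus_IZR; lra).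
  apply lt_IZR in Hlt. lia.
Qed.

Definition dyadic_below (x : R) (k : nat) : Q :=
  inject_Z (Int_part (x * 2 ^ k) - 1) / inject_Z (2 ^ Z.of_nat k).

Lemma Q2R_inject_Z (m : Z) : Q2R (inject_Z m) = IZR m.
Proof. unfold Q2R; simpl. field. Qed.

Lemma Q2R_dyadic_below x k :
  Q2R (dyadic_below x k) = (IZR (Int_part (x * 2 ^ k)) - 1) * (/ 2) ^ k.
Proof.
  assert (H2k : Q2R (inject_Z (2 ^ Z.of_nat k)) = 2 ^ k)
    by now rewrite Q2R_inject_Z, <- pow_IZR.
  unfold dyadic_below. rewrite Q2R_div.
  - rewrite H2k, Q2R_inject_Z, minus_IZR, pow_inv. reflexivity.
  - intros E. apply Qeq_eqR in E. rewrite H2k in E.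
    unfold Q2R in E; simpl in E. rewrite Rmult_0_l in E.
    revert E. apply pow_nonzero. lra.
Qed.

Lemma dyadic_below_bounds x k :
  x - 2 * (/ 2) ^ k < Q2R (dyadic_below x k) <= x - (/ 2) ^ k.
Proof.
  rewrite Q2R_dyadic_below. destruct (base_Int_part (x * 2 ^ k)) as [Hle Hgt].
  pose proof (half_pow_pos k) as Hh.
  assert (Hx : x = x * 2 ^ k * (/ 2) ^ k)
    by (rewrite pow_inv; field; apply pow_nonzero; lra).
  split.
  - rewrite Hx at 1. nra.
  - rewrite Hx at 2. nra.
Qed.

Lemma dyadic_below_shift_le x k m : (k <= m)%nat ->
  Q2R (dyadic_below x k) + (/ 2) ^ k <= Q2R (dyadic_below x m) + (/ 2) ^ m.
Proof.
  intros Hkm. destruct (Nat.le_exists_sub k m Hkm) as [j [-> _]].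
  rewrite !Q2R_dyadic_below, !pow_add.
  set (Fk := Int_part (x * 2 ^ k)).
  set (Fm := Int_part (x * (2 ^ j * 2 ^ k))).
  assert (Hj : 0 < 2 ^ j) by (apply pow_lt; lra).
  assert (HF : IZR Fk * 2 ^ j <= IZR Fm).
  { rewrite pow_IZR, <- mult_IZR. apply IZR_le, Int_part_ge.
    rewrite mult_IZR, <- pow_IZR.
    replace (x * (2 ^ j * 2 ^ k)) with (x * 2 ^ k * 2 ^ j) by ring.
    apply Rmult_le_compat_r; [lra|apply base_Int_part]. }
  assert (Hjh : (/ 2) ^ j * 2 ^ j = 1)
    by (rewrite pow_inv; field; apply pow_nonzero; lra).
  pose proof (half_pow_pos j). pose proof (half_pow_pos k).
  replace ((IZR Fk - 1) * (/ 2) ^ k + (/ 2) ^ k)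
    with (IZR Fk * 2 ^ j * ((/ 2) ^ j * (/ 2) ^ k))
    by (transitivity (IZR Fk * (/ 2) ^ k * ((/ 2) ^ j * 2 ^ j)); [|rewrite Hjh]; ring).
  replace ((IZR Fm - 1) * ((/ 2) ^ j * (/ 2) ^ k) + (/ 2) ^ j * (/ 2) ^ k)
    with (IZR Fm * ((/ 2) ^ j * (/ 2) ^ k)) by ring.
  apply Rmult_le_compat_r; [nra|exact HF].
Qed.

Lemma dyadic_below_incr x k m : (k < m)%nat ->
  (/ 2) ^ k - (/ 2) ^ m <= Q2R (dyadic_below x m) - Q2R (dyadic_below x k)
  < 2 * (/ 2) ^ k.
Proof.
  intros Hkm.
  pose proof (dyadic_below_shift_le x k m ltac:(lia)).
  pose proof (dyadic_below_bounds x k). pose proof (dyadic_below_bounds x m).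
  pose proof (half_pow_pos m). lra.
Qed.

Lemma dyadic_below_cv x (phi : nat -> nat) : (forall n, (n <= phi n)%nat) ->
  Un_cv (fun n => Q2R (dyadic_below x (phi n))) x.
Proof.
  intros Hphi. apply (Un_cv_half_pow_bound _ _ 2); [lra|]. intros n _.
  pose proof (dyadic_below_bounds x (phi n)). pose proof (half_pow_pos (phi n)).
  pose proof (half_pow_le n (phi n) (Hphi n)).
  rewrite Rabs_left1; lra.
Qed.

Section Construction.

Variables w z : R.

Definition p_seq (n : nat) : Q := dyadic_below w (S n).

Definition b_seq (n : nat) : Q := dyadic_below (z - w) (n * (n + 3)).

Definition q_seq (n : nat) : Q := (p_seq n + b_seq n)%Q.

Definition gamma_seq (n : nat) : Q :=
  ((b_seq (S n) - b_seq n) / (p_seq (S n) - p_seq n))%Q.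

Lemma DeltaQ_p_seq_bounds n : (/ 2) ^ S (S n) <= DeltaQ p_seq n < (/ 2) ^ n.
Proof.
  unfold DeltaQ, p_seq.
  pose proof (dyadic_below_incr w (S n) (S (S n)) ltac:(lia)).
  simpl pow in *. lra.
Qed.

Lemma DeltaQ_p_seq_pos n : 0 < DeltaQ p_seq n.
Proof.
  pose proof (DeltaQ_p_seq_bounds n). pose proof (half_pow_pos (S (S n))). lra.
Qed.

Lemma b_seq_incr_bounds n :
  0 < Q2R (b_seq (S n)) - Q2R (b_seq n) < 2 * (/ 2) ^ (n * (n + 3)).
Proof.
  unfold b_seq.
  assert (Hlt : (n * (n + 3) < S n * (S n + 3))%nat) by nia.
  pose proof (dyadic_below_incr (z - w) _ _ Hlt).
  pose proof (half_pow_lt _ _ Hlt). lra.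
Qed.

Lemma Q2R_q_seq n : Q2R (q_seq n) = Q2R (p_seq n) + Q2R (b_seq n).
Proof. apply Q2R_plus. Qed.

Lemma Q2R_gamma_seq n :
  Q2R (gamma_seq n) = (Q2R (b_seq (S n)) - Q2R (b_seq n)) / DeltaQ p_seq n.
Proof.
  pose proof (DeltaQ_p_seq_pos n) as HD. unfold DeltaQ in HD.
  unfold gamma_seq. rewrite Q2R_div, !Q2R_minus; [reflexivity|].
  intros E. apply Qeq_eqR in E. rewrite Q2R_minus in E.
  unfold Q2R in E at 3; simpl in E. lra.
Qed.

Lemma q_seq_step n :
  Q2R (q_seq (S n)) = Q2R (q_seq n) + DeltaQ p_seq n * (1 + Q2R (gamma_seq n)).
Proof.
  pose proof (DeltaQ_p_seq_pos n). rewrite !Q2R_q_seq, Q2R_gamma_seq.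
  unfold DeltaQ in *. field. lra.
Qed.

Lemma gamma_seq_pos n : 0 < Q2R (gamma_seq n).
Proof.
  rewrite Q2R_gamma_seq.
  apply Rdiv_lt_0_compat; [apply b_seq_incr_bounds|apply DeltaQ_p_seq_pos].
Qed.

Lemma p_seq_incr n : Q2R (p_seq n) < Q2R (p_seq (S n)).
Proof. pose proof (DeltaQ_p_seq_pos n). unfold DeltaQ in *. lra. Qed.

Lemma q_seq_incr n : Q2R (q_seq n) < Q2R (q_seq (S n)).
Proof.
  pose proof (DeltaQ_p_seq_pos n). pose proof (b_seq_incr_bounds n).
  rewrite !Q2R_q_seq. unfold DeltaQ in *. lra.
Qed.

Lemma p_seq_cv : Un_cv (fun n => Q2R (p_seq n)) w.
Proof. apply dyadic_below_cv. lia. Qed.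

Lemma q_seq_cv : Un_cv (fun n => Q2R (q_seq n)) z.
Proof.
  replace z with (w + (z - w)) by ring.
  apply Un_cv_ext with (fun n => Q2R (p_seq n) + Q2R (b_seq n)).
  - intros n. symmetry. apply Q2R_q_seq.
  - apply CV_plus; [apply p_seq_cv|]. apply dyadic_below_cv. nia.
Qed.

Lemma gamma_seq_ratio_le n : (1 <= n)%nat ->
  Q2R (gamma_seq n) / DeltaQ p_seq n ^ (n - 1) <= 2 * (/ 2) ^ n.
Proof.
  intros Hn. destruct n as [|m]; [lia|]. replace (S m - 1)%nat with m by lia.
  pose proof (DeltaQ_p_seq_pos (S m)) as HD.
  pose proof (b_seq_incr_bounds (S m)) as Hb.
  rewrite Q2R_gamma_seq.
  replace ((Q2R (b_seq (S (S m))) - Q2R (b_seq (S m))) / DeltaQ p_seq (S m)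
             / DeltaQ p_seq (S m) ^ m)
    with ((Q2R (b_seq (S (S m))) - Q2R (b_seq (S m))) / DeltaQ p_seq (S m) ^ S m)
    by (simpl; field; split; try apply pow_nonzero; lra).
  apply Rdiv_pow_le with ((/ 2) ^ S (S (S m))).
  - split; [apply half_pow_pos|apply DeltaQ_p_seq_bounds].
  - rewrite <- pow_mult, Rmult_assoc, <- pow_add.
    replace (S m + S (S (S m)) * S m)%nat with (S m * (S m + 3))%nat by lia.
    lra.
Qed.

Lemma gamma_seq_ratio_cv :
  Un_cv (fun n => Q2R (gamma_seq n) / DeltaQ p_seq n ^ (n - 1)) 0.
Proof.
  apply (Un_cv_half_pow_bound _ _ 2); [lra|]. intros n Hn.
  pose proof (gamma_seq_pos n). pose proof (DeltaQ_p_seq_pos n).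
  rewrite Rminus_0_r, Rabs_right by (apply Rle_ge, Rlt_le, Rdiv_lt_0_compat;
                                       [|apply pow_lt]; lra).
  apply gamma_seq_ratio_le, Hn.
Qed.

End Construction.

Theorem lemma5p5 (w z : R) :
  exists p q g : nat -> Q,
    (forall n : nat, (1 <= n)%nat -> Q2R (p n) < Q2R (p (S n))) /\
    (forall n : nat, (1 <= n)%nat -> Q2R (q n) < Q2R (q (S n))) /\
    Un_cv (fun n => Q2R (p n)) w /\
    Un_cv (fun n => Q2R (q n)) z /\
    (forall n : nat, (1 <= n)%nat -> 0 < Q2R (g n)) /\
    (forall n : nat, (1 <= n)%nat ->
       0 < DeltaQ p n < 1 /\
       Q2R (q (S n)) = Q2R (q n) + DeltaQ p n * (1 + Q2R (g n))) /\
    Un_cv (fun n => Q2R (g n) / (DeltaQ p n) ^ (n - 1)) 0.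
Proof.
  exists (p_seq w), (q_seq w z), (gamma_seq w z).
  split; [|split; [|split; [|split; [|split; [|split]]]]].
  - intros n _. apply p_seq_incr.
  - intros n _. apply q_seq_incr.
  - apply p_seq_cv.
  - apply q_seq_cv.
  - intros n _. apply gamma_seq_pos.
  - intros n Hn. split; [split|].
    + apply DeltaQ_p_seq_pos.
    + pose proof (DeltaQ_p_seq_bounds w n). pose proof (half_pow_le 1 n Hn).
      simpl pow in *. lra.
    + apply q_seq_step.
  - apply gamma_seq_ratio_cv.
Qed.
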